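(* Let $\alpha=\{a_k\}_{k\ge1}$ be a sequence of positive real numbers such that $A^*(m):=\#\{k: a_k\le m\}$ satisfies $A^*(m)=O(m^\nu)$ as $m\to\infty$ for some $\nu>0$. Then $\lim_{N\to\infty}E[U_j^N]=I(\alpha;j)<\infty$ for all $j\ge2$.
   Context: For $N\ge2$, coupon type $k\in\{1,\dots,N\}$ has probability $a_k/\sum_{i=1}^Na_i$; $U_j^N$ is the number of empty album places of the $j$-th collector when the first collector completes her set (each collector passes duplicates to the next one), with $$E[U_j^N]=\sum_{k=1}^N\int_0^\infty a_k e^{-a_k t}\frac{(a_kt)^{j-1}}{(j-1)!}\prod_{i\ne k,\,1\le i\le N}\big(1-e^{-a_i t}\big)\,dt.$$ $x_\alpha:=\inf\{x\in[0,1]:\sum_k x^{a_k}=\infty\}$, $L(x;\alpha;j):=\sum_{k}a_k^j\frac{x^{a_k}}{1-x^{a_k}}$, $F(x;\alpha):=\prod_{k}(1-x^{a_k})$, $I(\alpha;j):=\frac{1}{(j-1)!}\int_0^{x_\alpha}L(x;\alpha;j)F(x;\alpha)|\ln x|^{j-1}\frac{dx}{x}$. *)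

From Stdlib Require Import Reals Lra ClassicalEpsilon Arith Factorial.
Open Scope R_scope.

(* sumR n f = f 1 + ... + f n ; prodR n f = f 1 * ... * f n *)
Fixpoint sumR (n : nat) (f : nat -> R) : R :=
  match n with O => 0 | S m => sumR m f + f (S m) end.
Fixpoint prodR (n : nat) (f : nat -> R) : R :=
  match n with O => 1 | S m => prodR m f * f (S m) end.

(* x^a for x in [0,1], a > 0, with the convention 0^a = 0 *)
Definition rpow (x a : R) : R := if Rle_dec x 0 then 0 else Rpower x a.

(* the limit of a sequence if it converges, 0 otherwise *)
Definition seq_lim (u : nat -> R) : R :=
  match excluded_middle_informative (exists l, Un_cv u l) with
  | left H => proj1_sig (constructive_indefinite_description _ H)
  | right _ => 0
  end.

(* A*(m) restricted to the first n indices: #{1<=k<=n : a_k <= m} *)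
Definition Astar_upto (a : nat -> R) (n : nat) (m : R) : R :=
  sumR n (fun k => if Rle_dec (a k) m then 1 else 0).

(* integrand of E[U_j^N] *)
Definition EU_integrand (a : nat -> R) (N j : nat) (t : R) : R :=
  sumR N (fun k =>
    a k * exp (- (a k * t)) * (a k * t) ^ (j - 1) / INR (fact (j - 1))
    * prodR N (fun i => if Nat.eq_dec i k then 1 else 1 - exp (- (a i * t)))).

Definition improper_int0 (f : R -> R) (l : R) : Prop :=
  (forall T, 0 <= T -> inhabited (Riemann_integrable f 0 T)) /\
  forall eps, eps > 0 -> exists T0, forall T (pr : Riemann_integrable f 0 T),
    T0 <= T -> Rabs (RiemannInt pr - l) < eps.

Definition improper_int_open (f : R -> R) (lo hi l : R) : Prop :=
  (forall u v, lo < u -> u <= v -> v < hi -> inhabited (Riemann_integrable f u v)) /\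
  forall eps, eps > 0 -> exists d, d > 0 /\
    forall u v (pr : Riemann_integrable f u v),
      lo < u -> u < lo + d -> hi - d < v -> v < hi -> u <= v ->
      Rabs (RiemannInt pr - l) < eps.

Definition sum_pow_diverges (a : nat -> R) (x : R) : Prop :=
  cv_infty (fun n => sumR n (fun k => rpow x (a k))).

Definition is_inf (S : R -> Prop) (x : R) : Prop :=
  (forall y, S y -> x <= y) /\ (forall z, (forall y, S y -> z <= y) -> z <= x).

Definition is_x_alpha (a : nat -> R) (x : R) : Prop :=
  is_inf (fun y => 0 <= y <= 1 /\ sum_pow_diverges a y) x.

Definition Lfun (a : nat -> R) (x : R) (j : nat) : R :=
  seq_lim (fun n => sumR n (fun k => a k ^ j * rpow x (a k) / (1 - rpow x (a k)))).
Definition Ffun (a : nat -> R) (x : R) : R :=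
  seq_lim (fun n => prodR n (fun k => 1 - rpow x (a k))).

(* integrand of I(alpha;j) (with the 1/(j-1)! factor) *)
Definition I_integrand (a : nat -> R) (j : nat) (x : R) : R :=
  / INR (fact (j - 1)) * Lfun a x j * Ffun a x * (Rabs (ln x)) ^ (j - 1) / x.

(* Substituting x = exp (- t), the integrand of E[U_j^N] becomes
   t^(j-1)/(j-1)! L_N(t) F_N(t), where L_N and F_N are the N-th partial sum of L and partial
   product of F at x = exp (- t); the integrand of I(alpha; j) becomes t^(j-1)/(j-1)! L F.
   Sorting the a_k into unit bins, A*(m) = O(m^nu) gives
   sum_k (a_k^j + 1) exp (- a_k t) <= K / t^q on (0, 1].  Hence x_alpha = 1, inf a_k = c > 0, and
   L_N, F_N converge uniformly on every [d, +oo), so the integrands converge locally uniformly on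
   (0, +oo).  They are bounded near 0 uniformly in N (the first q + 1 factors of F_N contribute
   (b t)^q) and dominated by B exp (- c t / 2) at infinity, so the integrals converge as well. *)

From Stdlib Require Import Reals Lra Lia ClassicalEpsilon ZArith.
From Coquelicot Require Import Coquelicot.
Open Scope R_scope.

(** * Finite sums and products *)

Lemma sumR_S n f : sumR (S n) f = sumR n f + f (S n).
Proof. reflexivity. Qed.

Lemma prodR_S n f : prodR (S n) f = prodR n f * f (S n).
Proof. reflexivity. Qed.

Lemma sumR_ext n f g :
  (forall k, (1 <= k <= n)%nat -> f k = g k) -> sumR n f = sumR n g.
Proof.
  induction n as [|n IH]; intros H; simpl; [reflexivity|].
  rewrite IH, H by first [lia | intros; apply H; lia]; reflexivity.
Qed.

Lemma sumR_le n f g :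
  (forall k, (1 <= k <= n)%nat -> f k <= g k) -> sumR n f <= sumR n g.
Proof.
  induction n as [|n IH]; intros H; simpl; [lra|].
  apply Rplus_le_compat; [apply IH; intros; apply H|apply H]; lia.
Qed.

Lemma sumR_0 n : sumR n (fun _ => 0) = 0.
Proof. induction n as [|n IH]; simpl; [|rewrite IH]; lra. Qed.

Lemma sumR_nonneg n f : (forall k, (1 <= k <= n)%nat -> 0 <= f k) -> 0 <= sumR n f.
Proof. intros H. rewrite <- (sumR_0 n). now apply sumR_le. Qed.

Lemma sumR_plus n f g : sumR n (fun k => f k + g k) = sumR n f + sumR n g.
Proof. induction n as [|n IH]; simpl; [|rewrite IH]; lra. Qed.

Lemma sumR_scal n c f : sumR n (fun k => c * f k) = c * sumR n f.
Proof. induction n as [|n IH]; simpl; [|rewrite IH]; lra. Qed.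

Lemma sumR_swap n m (f : nat -> nat -> R) :
  sumR n (fun k => sumR m (fun l => f k l)) = sumR m (fun l => sumR n (fun k => f k l)).
Proof.
  induction n as [|n IH]; simpl; [now rewrite sumR_0|].
  now rewrite IH, <- sumR_plus.
Qed.

Lemma sumR_mono n m f : (forall k, 0 <= f k) -> (n <= m)%nat -> sumR n f <= sumR m f.
Proof. intros H Hnm. induction Hnm; simpl; [lra|]. specialize (H (S m)); lra. Qed.

Lemma sumR_ge_term n f k : (forall i, 0 <= f i) -> (1 <= k <= n)%nat -> f k <= sumR n f.
Proof.
  intros H Hk. apply Rle_trans with (sumR k f); [|apply sumR_mono; [exact H|lia]].
  destruct k as [|k]; [lia|]. rewrite sumR_S.
  pose proof (sumR_nonneg k f (fun i _ => H i)). lra.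
Qed.

Lemma prodR_ext n f g :
  (forall k, (1 <= k <= n)%nat -> f k = g k) -> prodR n f = prodR n g.
Proof.
  induction n as [|n IH]; intros H; simpl; [reflexivity|].
  rewrite IH, H by first [lia | intros; apply H; lia]; reflexivity.
Qed.

Lemma prodR_in_01 n f :
  (forall k, (1 <= k <= n)%nat -> 0 <= f k <= 1) -> 0 <= prodR n f <= 1.
Proof.
  induction n as [|n IH]; intros H; simpl; [lra|].
  destruct IH as [P0 P1]; [intros; apply H; lia|].
  destruct (H (S n) ltac:(lia)). split; [apply Rmult_le_pos; lra|].
  rewrite <- (Rmult_1_l 1). apply Rmult_le_compat; lra.
Qed.

Lemma prodR_trunc_le n m f :
  (forall k, (1 <= k <= m)%nat -> 0 <= f k <= 1) -> (n <= m)%nat -> prodR m f <= prodR n f.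
Proof.
  intros H Hnm. induction Hnm as [|m Hnm IH]; [lra|].
  rewrite prodR_S. destruct (H (S m) ltac:(lia)).
  assert (0 <= prodR m f) by (apply prodR_in_01; intros; apply H; lia).
  specialize (IH ltac:(intros; apply H; lia)). nra.
Qed.

Lemma prodR_except_mul n f k : (1 <= k <= n)%nat ->
  prodR n (fun i => if Nat.eq_dec i k then 1 else f i) * f k = prodR n f.
Proof.
  induction n as [|n IH]; intros Hk; [lia|]. rewrite !prodR_S.
  destruct (Nat.eq_dec (S n) k) as [<-|Hn].
  - rewrite (prodR_ext n _ f); [lra|].
    intros i Hi. destruct (Nat.eq_dec i (S n)); [lia|reflexivity].
  - rewrite <- IH by lia. lra.
Qed.

(* The factor [k] is dropped, so among the first [N0] factors at least [N0 - 1] are [<= mu]. *)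
Lemma prodR_except_le_pow N N0 k mu f :
  0 <= mu <= 1 -> (N0 <= N)%nat ->
  (forall i, (1 <= i <= N)%nat -> 0 <= f i <= 1) ->
  (forall i, (1 <= i <= N0)%nat -> f i <= mu) ->
  prodR N (fun i => if Nat.eq_dec i k then 1 else f i) <= mu ^ (N0 - 1).
Proof.
  intros Hmu HN Hf Hfmu. set (G := fun i => if Nat.eq_dec i k then 1 else f i).
  assert (HG : forall i, (1 <= i <= N)%nat -> 0 <= G i <= 1).
  { intros i Hi; unfold G; destruct (Nat.eq_dec i k); [lra|auto]. }
  assert (Hpref : forall n, (n <= N0)%nat ->
            prodR n G <= mu ^ (if le_lt_dec k n then n - 1 else n)).
  { induction n as [|n IH]; intros Hn; [destruct (le_lt_dec k 0); simpl; lra|].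
    rewrite prodR_S. specialize (IH ltac:(lia)).
    assert (0 <= prodR n G) by (apply prodR_in_01; intros; apply HG; lia).
    destruct (HG (S n) ltac:(lia)).
    unfold G at 2. destruct (Nat.eq_dec (S n) k) as [<-|Hk].
    - destruct (le_lt_dec (S n) n); [lia|]. destruct (le_lt_dec (S n) (S n)); [|lia].
      replace (S n - 1)%nat with n by lia. lra.
    - assert (f (S n) <= mu) by (apply Hfmu; lia).
      destruct (Hf (S n) ltac:(lia)).
      assert (Hpow : forall e, mu ^ e * f (S n) <= mu ^ S e).
      { intros e. simpl. rewrite Rmult_comm. apply Rmult_le_compat_r; [apply pow_le|]; lra. }
      destruct (le_lt_dec k n), (le_lt_dec k (S n)); try lia.
      + destruct n as [|n]; [simpl in *; nra|].
        replace (S (S n) - 1)%nat with (S (S n - 1)) by lia.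
        eapply Rle_trans; [|apply Hpow]. nra.
      + replace (S n - 1)%nat with n by lia. eapply Rle_trans; [|apply Hpow]. nra. }
  apply Rle_trans with (prodR N0 G); [apply prodR_trunc_le; auto|].
  eapply Rle_trans; [apply (Hpref N0 (le_n _))|].
  destruct (le_lt_dec k N0); [lra|].
  destruct N0 as [|N0]; [simpl; lra|]. replace (S N0 - 1)%nat with N0 by lia.
  simpl. pose proof (pow_le mu N0 (proj1 Hmu)). nra.
Qed.

Lemma seq_lim_eq u l : Un_cv u l -> seq_lim u = l.
Proof.
  intros H. unfold seq_lim. destruct (excluded_middle_informative _) as [e|e].
  - destruct (constructive_indefinite_description _ e) as [l' Hl']; simpl.
    eapply UL_sequence; eauto.
  - exfalso; apply e; eauto.
Qed.

Lemma Un_cv_le_ub u l n0 b : Un_cv u l -> (forall m, (n0 <= m)%nat -> u m <= b) -> l <= b.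
Proof.
  intros H Hb. apply Rnot_lt_le; intros Hc. destruct (H (l - b) ltac:(lra)) as [N HN].
  specialize (HN (max N n0) ltac:(lia)). specialize (Hb (max N n0) ltac:(lia)).
  unfold R_dist in HN. apply Rabs_def2 in HN. lra.
Qed.

Lemma Un_cv_ge_lb u l n0 b : Un_cv u l -> (forall m, (n0 <= m)%nat -> b <= u m) -> b <= l.
Proof.
  intros H Hb. apply Rnot_lt_le; intros Hc. destruct (H (b - l) ltac:(lra)) as [N HN].
  specialize (HN (max N n0) ltac:(lia)). specialize (Hb (max N n0) ltac:(lia)).
  unfold R_dist in HN. apply Rabs_def2 in HN. lra.
Qed.

(** * Elementary inequalities *)

Lemma exp_le_compat x y : x <= y -> exp x <= exp y.
Proof. intros [H| ->]; [left; now apply exp_increasing|lra]. Qed.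

Lemma exp_neg_lt_1 x : 0 < x -> exp (- x) < 1.
Proof. intros Hx. rewrite <- exp_0. apply exp_increasing. lra. Qed.

Lemma exp_neg_le_1 x : 0 <= x -> exp (- x) <= 1.
Proof. intros Hx. rewrite <- exp_0. apply exp_le_compat. lra. Qed.

Lemma pow_exp x n : exp x ^ n = exp (INR n * x).
Proof.
  induction n as [|n IH]; [simpl; now rewrite Rmult_0_l, exp_0|].
  rewrite S_INR, <- tech_pow_Rmult, IH, <- exp_plus. f_equal; ring.
Qed.

Lemma pow_le_1 t p : 0 <= t <= 1 -> t ^ p <= 1.
Proof. intros H. rewrite <- (pow1 p). apply pow_incr; lra. Qed.

(* [(y / Q) ^ Q <= exp (y / Q) ^ Q] *)
Lemma pow_le_exp Q y : 0 <= y -> y ^ Q <= INR Q ^ Q * exp y.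
Proof.
  intros Hy. destruct Q as [|Q]; [simpl; pose proof (exp_ineq1_le y); lra|].
  set (q := INR (S Q)). assert (Hq : 0 < q) by (apply lt_0_INR; lia).
  assert (Hyq : 0 <= y / q) by (apply Rdiv_le_0_compat; lra).
  replace (y ^ S Q) with (q ^ S Q * (y / q) ^ S Q)
    by (rewrite <- Rpow_mult_distr; f_equal; field; lra).
  replace (exp y) with (exp (y / q) ^ S Q) by (rewrite pow_exp; f_equal; fold q; field; lra).
  apply Rmult_le_compat_l; [apply pow_le; lra|].
  apply pow_incr. pose proof (exp_ineq1_le (y / q)). lra.
Qed.

Lemma pow_le_exp_scaled Q s y : 0 < s -> 0 <= y ->
  y ^ Q <= INR Q ^ Q * (/ s) ^ Q * exp (s * y).
Proof.
  intros Hs Hy. pose proof (pow_le_exp Q (s * y) ltac:(apply Rmult_le_pos; lra)).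
  replace y with (s * y * / s) at 1 by (field; lra).
  rewrite Rpow_mult_distr. pose proof (pow_lt (/ s) Q ltac:(apply Rinv_0_lt_compat; lra)). nra.
Qed.

Lemma geom_sumR_le r K : 0 <= r < 1 -> sumR K (fun m => r ^ m) <= 1 / (1 - r).
Proof.
  intros Hr. assert (E : (1 - r) * sumR K (fun m => r ^ m) = r - r ^ S K).
  { induction K as [|K IH]; [simpl; ring|].
    rewrite sumR_S, Rmult_plus_distr_l, IH. simpl. ring. }
  pose proof (pow_le r (S K) (proj1 Hr)).
  apply (Rmult_le_reg_l (1 - r)); [lra|]. rewrite E. field_simplify; lra.
Qed.

(* [(2 - s) exp s >= (2 - s) (1 + s) >= 2] *)
Lemma one_minus_exp_neg_ge s : 0 < s <= 1 -> s / 2 <= 1 - exp (- s).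
Proof.
  intros Hs. pose proof (exp_ineq1_le s). pose proof (exp_pos s).
  rewrite exp_Ropp. apply (Rmult_le_reg_r (exp s)); [lra|]. field_simplify; [|lra].
  assert ((2 - s) * (1 + s) <= (2 - s) * exp s) by (apply Rmult_le_compat_l; lra). nra.
Qed.

Lemma geom_exp_sumR_le t K : 0 < t <= 1 -> sumR K (fun m => exp (- (t / 2)) ^ m) <= 4 / t.
Proof.
  intros Ht. pose proof (one_minus_exp_neg_ge (t / 2) ltac:(lra)).
  set (r := exp (- (t / 2))) in *.
  assert (Hr : 0 <= r < 1) by (split; [left; apply exp_pos|apply exp_neg_lt_1; lra]).
  eapply Rle_trans; [now apply geom_sumR_le|].
  replace (4 / t) with (1 / (t / 4)) by (field; lra).
  apply Rmult_le_compat_l; [lra|]. apply Rinv_le_contravar; lra.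
Qed.

Lemma exp_neg_le_inv x : 0 < x -> exp (- x) <= 1 / x.
Proof.
  intros Hx. rewrite exp_Ropp. pose proof (exp_ineq1_le x).
  unfold Rdiv; rewrite Rmult_1_l. apply Rinv_le_contravar; lra.
Qed.

Lemma ln_lt_0 x : 0 < x < 1 -> ln x < 0.
Proof. intros Hx. rewrite <- ln_1. apply ln_increasing; lra. Qed.

Lemma opp_ln_le v : 1 / 2 <= v < 1 -> - ln v <= 2 * (1 - v).
Proof.
  intros Hv. pose proof (exp_ineq1_le (- ln v)).
  rewrite exp_Ropp, exp_ln in H by lra.
  assert (/ v <= 1 + 2 * (1 - v)); [|lra].
  apply (Rmult_le_reg_r v); [lra|]. rewrite Rinv_l by lra. nra.
Qed.

Lemma rpow_exp t b : rpow (exp (- t)) b = exp (- (b * t)).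
Proof.
  unfold rpow. destruct (Rle_dec (exp (- t)) 0); [pose proof (exp_pos (- t)); lra|].
  unfold Rpower. rewrite ln_exp. f_equal; ring.
Qed.

Lemma rpow_1 b : rpow 1 b = 1.
Proof.
  unfold rpow. destruct (Rle_dec 1 0); [lra|].
  unfold Rpower. now rewrite ln_1, Rmult_0_r, exp_0.
Qed.

(** * The counting function [A*] *)

Definition Astar_poly_growth (a : nat -> R) : Prop :=
  exists C nu M, 0 < nu /\ 0 < M /\
    forall m, M <= m -> forall n, Astar_upto a n m <= C * Rpower m nu.

Lemma Astar_upto_mono a n m m' : m <= m' -> Astar_upto a n m <= Astar_upto a n m'.
Proof.
  intros H. unfold Astar_upto. apply sumR_le. intros k _.
  destruct (Rle_dec (a k) m), (Rle_dec (a k) m'); lra.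
Qed.

Lemma Astar_upto_mono_n a n n' m : (n <= n')%nat -> Astar_upto a n m <= Astar_upto a n' m.
Proof. intros H. apply sumR_mono; auto. intros k; destruct (Rle_dec _ _); lra. Qed.

(* the least natural number [> x], for [x > 0] *)
Definition up_nat (x : R) : nat := Z.to_nat (up x).

Lemma up_nat_spec x : 0 < x -> (1 <= up_nat x)%nat /\ INR (up_nat x) - 1 <= x < INR (up_nat x).
Proof.
  intros Hx. destruct (archimed x) as [H1 H2]. unfold up_nat.
  assert (0 < up x)%Z by (apply lt_IZR; simpl; lra).
  rewrite INR_IZR_INZ, Z2Nat.id by lia. split; [lia|lra].
Qed.

Fixpoint up_nat_max (a : nat -> R) (n : nat) : nat :=
  match n with O => O | S m => Nat.max (up_nat_max a m) (up_nat (a (S m))) end.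

Lemma up_nat_max_spec a n k : (1 <= k <= n)%nat -> (up_nat (a k) <= up_nat_max a n)%nat.
Proof.
  induction n as [|n IH]; intros H; simpl; [lia|].
  destruct (Nat.eq_dec k (S n)) as [->|]; [lia|]. specialize (IH ltac:(lia)); lia.
Qed.

Lemma exists_pos_ub_upto (a : nat -> R) N : exists b, 0 < b /\ forall i, (1 <= i <= N)%nat -> a i <= b.
Proof.
  induction N as [|N [b [Hb H]]]; [exists 1; split; [lra|intros; lia]|].
  exists (Rmax b (a (S N))). split; [eapply Rlt_le_trans; [exact Hb|apply Rmax_l]|].
  intros i Hi. destruct (Nat.eq_dec i (S N)) as [->|]; [apply Rmax_r|].
  apply Rle_trans with b; [apply H; lia|apply Rmax_l].
Qed.

Lemma exists_pos_lb_upto (a : nat -> R) N : (forall k, (1 <= k)%nat -> 0 < a k) ->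
  exists c, 0 < c /\ forall i, (1 <= i <= N)%nat -> c <= a i.
Proof.
  intros Hpos. induction N as [|N [c [Hc H]]]; [exists 1; split; [lra|intros; lia]|].
  exists (Rmin c (a (S N))). split; [apply Rmin_glb_lt; auto; apply Hpos; lia|].
  intros i Hi. destruct (Nat.eq_dec i (S N)) as [->|]; [apply Rmin_r|].
  apply Rle_trans with c; [apply Rmin_l|apply H; lia].
Qed.

(* With [nu <= P := up_nat nu] and [m >= 1]: [Rpower m nu <= m ^ P]. *)
Lemma Astar_upto_le_pow a : Astar_poly_growth a ->
  exists C P, 0 <= C /\ forall n (m : nat), (1 <= m)%nat -> Astar_upto a n (INR m) <= C * INR m ^ P.
Proof.
  intros (C & nu & M & Hnu & HM & H).
  set (M' := Rmax M 1). assert (HM' : 1 <= M') by apply Rmax_r.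
  set (P := up_nat nu). destruct (up_nat_spec nu Hnu) as [_ [_ HP]]. fold P in HP.
  exists (Rabs C * M' ^ P), P. split; [apply Rmult_le_pos; [apply Rabs_pos|apply pow_le; lra]|].
  intros n m Hm. assert (Hm1 : 1 <= INR m) by (apply (le_INR 1); lia).
  set (y := Rmax (INR m) M').
  assert (Hy : INR m <= y /\ M <= y /\ y <= INR m * M').
  { unfold y, M' in *. pose proof (Rmax_r (INR m) (Rmax M 1)). pose proof (Rmax_l M 1).
    split; [apply Rmax_l|split; [lra|]]. apply Rmax_lub; nra. }
  assert (0 < Rpower y nu) by apply exp_pos.
  apply Rle_trans with (Astar_upto a n y); [apply Astar_upto_mono; lra|].
  apply Rle_trans with (C * Rpower y nu); [apply H; lra|].
  apply Rle_trans with (Rabs C * Rpower y nu); [apply Rmult_le_compat_r; [lra|apply Rle_abs]|].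
  rewrite Rmult_assoc. apply Rmult_le_compat_l; [apply Rabs_pos|].
  apply Rle_trans with (Rpower y (INR P)); [apply Rle_Rpower; lra|].
  rewrite Rpower_pow, <- Rpow_mult_distr by lra. apply pow_incr; lra.
Qed.

Lemma Astar_upto_bounded_eventually_gt a m B :
  (forall n, Astar_upto a n m <= B) -> exists N, forall k, (N < k)%nat -> m < a k.
Proof.
  intros HB. apply NNPP; intros Hc.
  assert (Hr : forall r : nat, exists n, INR r <= Astar_upto a n m).
  { induction r as [|r [n Hn]]; [exists 0%nat; unfold Astar_upto; simpl; lra|].
    destruct (classic (exists k, (n < k)%nat /\ a k <= m)) as [[k [Hk1 Hk2]]|Hk].
    - exists k. destruct k as [|k]; [lia|]. unfold Astar_upto in *. rewrite sumR_S, S_INR.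
      destruct (Rle_dec (a (S k)) m); [|lra].
      pose proof (Astar_upto_mono_n a n k m ltac:(lia)). unfold Astar_upto in *. lra.
    - exfalso; apply Hc. exists n. intros k Hk'. apply Rnot_le_lt. intros Hle. apply Hk; eauto. }
  destruct (INR_archimed 1 B ltac:(lra)) as [r Hr']. destruct (Hr r) as [n Hn].
  specialize (HB n). lra.
Qed.

Lemma exists_pos_lb a : (forall k, (1 <= k)%nat -> 0 < a k) -> Astar_poly_growth a ->
  exists c, 0 < c /\ forall k, (1 <= k)%nat -> c <= a k.
Proof.
  intros Hpos Hgr. destruct (Astar_upto_le_pow a Hgr) as (C & P & HC & HA).
  destruct (Astar_upto_bounded_eventually_gt a 1 C) as [N1 HN1].
  { intros n. pose proof (HA n 1%nat ltac:(lia)). simpl in H. now rewrite pow1, Rmult_1_r in H. }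
  destruct (exists_pos_lb_upto a N1 Hpos) as [c [Hc Hk]].
  exists (Rmin c 1). split; [apply Rmin_glb_lt; lra|].
  intros k Hk1. destruct (le_lt_dec k N1).
  - apply Rle_trans with c; [apply Rmin_l|apply Hk; lia].
  - apply Rle_trans with 1; [apply Rmin_r|left; apply HN1; lia].
Qed.

(* Each [a k] falls into the bin [m - 1 <= a k < m] with [m = up_nat (a k)], and bin [m]
   holds at most [Astar_upto a n m] indices. *)
Lemma sumR_le_bins a n (f g : nat -> R) :
  (forall k, (1 <= k)%nat -> 0 < a k) -> (forall m, 0 <= g m) ->
  (forall k, (1 <= k <= n)%nat -> f k <= g (up_nat (a k))) ->
  sumR n f <= sumR (up_nat_max a n) (fun m => g m * Astar_upto a n (INR m)).
Proof.
  intros Hpos Hg Hf.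
  set (ind := fun k (m : nat) => if Rle_dec (a k) (INR m) then 1 else 0).
  apply Rle_trans with (sumR n (fun k => sumR (up_nat_max a n) (fun m => g m * ind k m))).
  - apply sumR_le. intros k Hk. destruct (up_nat_spec (a k) (Hpos k ltac:(lia))) as [Hb1 Hb2].
    eapply Rle_trans; [apply Hf; lia|].
    eapply Rle_trans; [|apply (sumR_ge_term _ (fun m => g m * ind k m) (up_nat (a k)))].
    + unfold ind. destruct (Rle_dec _ _); [lra|exfalso; lra].
    + intros m. unfold ind. destruct (Rle_dec _ _); specialize (Hg m); lra.
    + split; [lia|now apply up_nat_max_spec].
  - rewrite sumR_swap. apply Req_le, sumR_ext. intros m _. now rewrite sumR_scal.
Qed.

(* [m ^ (p + P) e^(-m t) <= Q^Q (2/t)^Q e^(m t / 2) e^(-m t)] with [Q = p + P] *)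
Lemma bin_term_le p P C m t : 0 <= C -> (1 <= m)%nat -> 0 < t <= 1 ->
  (INR m ^ p + 1) * exp (- ((INR m - 1) * t)) * (C * INR m ^ P)
  <= 6 * C * (INR (p + P) ^ (p + P) * (/ (t / 2)) ^ (p + P)) * exp (- (t / 2)) ^ m.
Proof.
  intros HC Hm Ht. set (x := INR m). assert (Hx : 1 <= x) by (apply (le_INR 1); lia).
  assert (Hp : 1 <= x ^ p) by (apply pow_R1_Rle; lra).
  assert (HP : 0 <= x ^ P) by (apply pow_le; lra).
  assert (Hexp : exp (- ((x - 1) * t)) <= 3 * exp (- (x * t))).
  { replace (- ((x - 1) * t)) with (t + - (x * t)) by ring. rewrite exp_plus.
    pose proof (exp_pos (- (x * t))).
    assert (exp t <= 3) by (eapply Rle_trans; [apply exp_le_compat, (proj2 Ht)|apply exp_le_3]).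
    nra. }
  assert (Hpow := pow_le_exp_scaled (p + P) (t / 2) x ltac:(lra) ltac:(lra)).
  rewrite pow_add in Hpow. rewrite pow_exp.
  replace (exp (INR m * - (t / 2))) with (exp (t / 2 * x) * exp (- (x * t)))
    by (rewrite <- exp_plus; f_equal; unfold x; field).
  set (Z := INR (p + P) ^ (p + P) * (/ (t / 2)) ^ (p + P)) in *.
  set (E := exp (- (x * t))) in *. assert (0 < E) by apply exp_pos.
  pose proof (exp_pos (- ((x - 1) * t))).
  apply Rle_trans with (6 * C * (x ^ p * x ^ P) * E).
  - assert (0 <= C * x ^ P) by (apply Rmult_le_pos; lra).
    apply Rle_trans with ((2 * x ^ p) * (3 * E) * (C * x ^ P));
      [apply Rmult_le_compat_r; [lra|]; apply Rmult_le_compat; lra|right; ring].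
  - replace (6 * C * Z * (exp (t / 2 * x) * E)) with (6 * C * (Z * exp (t / 2 * x)) * E) by ring.
    apply Rmult_le_compat_r; [lra|]. apply Rmult_le_compat_l; lra.
Qed.

Lemma exp_weight_sum_le a p : (forall k, (1 <= k)%nat -> 0 < a k) -> Astar_poly_growth a ->
  exists K q, 0 < K /\ forall t, 0 < t <= 1 -> forall n,
    sumR n (fun k => (a k ^ p + 1) * exp (- (a k * t))) <= K / t ^ q.
Proof.
  intros Hpos Hgr. destruct (Astar_upto_le_pow a Hgr) as (C & P & HC & HA).
  set (Q := (p + P)%nat).
  assert (HQ : 0 <= INR Q ^ Q) by (apply pow_le, pos_INR).
  exists (24 * (C + 1) * INR Q ^ Q * 2 ^ Q + 1), (S Q).
  assert (0 <= 24 * (C + 1) * INR Q ^ Q * 2 ^ Q)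
    by (pose proof (pow_le 2 Q ltac:(lra)); repeat apply Rmult_le_pos; lra).
  split; [lra|]. intros t Ht n.
  set (g := fun m : nat => (INR m ^ p + 1) * exp (- ((INR m - 1) * t))).
  assert (Hg : forall m, 0 <= g m).
  { intros m. unfold g. pose proof (pow_le (INR m) p (pos_INR m)).
    pose proof (exp_pos (- ((INR m - 1) * t))). nra. }
  eapply Rle_trans; [apply (sumR_le_bins a n _ g Hpos Hg)|].
  { intros k Hk. destruct (up_nat_spec (a k) (Hpos k ltac:(lia))) as [_ [Hb1 Hb2]].
    pose proof (Hpos k ltac:(lia)). unfold g. apply Rmult_le_compat.
    - pose proof (pow_le (a k) p ltac:(lra)); lra.
    - left; apply exp_pos.
    - apply Rplus_le_compat_r, pow_incr; lra.
    - apply exp_le_compat, Ropp_le_contravar, Rmult_le_compat_r; lra. }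
  set (Z := INR Q ^ Q * (/ (t / 2)) ^ Q).
  apply Rle_trans with (sumR (up_nat_max a n) (fun m => 6 * C * Z * exp (- (t / 2)) ^ m)).
  { apply sumR_le. intros m Hm. eapply Rle_trans; [|apply bin_term_le; auto; lia].
    apply Rmult_le_compat_l; [apply Hg|]. apply HA; lia. }
  rewrite sumR_scal.
  assert (HZ : Z = INR Q ^ Q * 2 ^ Q / t ^ Q).
  { unfold Z. replace (/ (t / 2)) with (2 / t) by (field; lra).
    unfold Rdiv. rewrite Rpow_mult_distr, pow_inv. ring. }
  assert (0 < t ^ Q) by (apply pow_lt; lra).
  assert (0 <= Z) by (rewrite HZ; apply Rmult_le_pos; [pose proof (pow_le 2 Q); nra|];
                      left; apply Rinv_0_lt_compat; lra).
  apply Rle_trans with (6 * C * Z * (4 / t)).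
  { apply Rmult_le_compat_l; [nra|apply geom_exp_sumR_le; lra]. }
  rewrite HZ. simpl pow. apply Rmult_le_reg_r with (t * t ^ Q); [nra|].
  field_simplify; try lra. pose proof (pow_le 2 Q ltac:(lra)). nra.
Qed.

Section ExpWeights.

Variables (a : nat -> R) (p : nat).
Hypothesis Hpos : forall k, (1 <= k)%nat -> 0 < a k.
Hypothesis Hgr : Astar_poly_growth a.

Definition exp_weight_sum (d : R) (n : nat) : R :=
  sumR n (fun k => (a k ^ p + 1) * exp (- (a k * d))).

Lemma exp_weight_nonneg d k : (1 <= k)%nat -> 0 <= (a k ^ p + 1) * exp (- (a k * d)).
Proof.
  intros Hk. pose proof (pow_le (a k) p ltac:(pose proof (Hpos k Hk); lra)).
  pose proof (exp_pos (- (a k * d))). nra.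
Qed.

Lemma exp_weight_sum_mono d n m : (n <= m)%nat -> exp_weight_sum d n <= exp_weight_sum d m.
Proof.
  intros H; induction H as [|m H IH]; [lra|]. unfold exp_weight_sum in *.
  rewrite sumR_S. pose proof (exp_weight_nonneg d (S m) ltac:(lia)). lra.
Qed.

Lemma exp_weight_sum_bounded d : 0 < d -> exists B, forall n, exp_weight_sum d n <= B.
Proof.
  intros Hd. destruct (exp_weight_sum_le a p Hpos Hgr) as (K & q & HK & H).
  set (t := Rmin d 1). assert (Ht : 0 < t <= 1) by (split; [apply Rmin_glb_lt|apply Rmin_r]; lra).
  exists (K / t ^ q). intros n. eapply Rle_trans; [|apply (H t Ht n)].
  apply sumR_le. intros k Hk. pose proof (Hpos k ltac:(lia)).
  apply Rmult_le_compat_l; [pose proof (pow_le (a k) p ltac:(lra)); lra|].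
  apply exp_le_compat, Ropp_le_contravar, Rmult_le_compat_l; [lra|apply Rmin_l].
Qed.

Lemma exp_weight_sum_cv d : 0 < d ->
  exists S, Un_cv (exp_weight_sum d) S /\ forall n, exp_weight_sum d n <= S.
Proof.
  intros Hd. destruct (exp_weight_sum_bounded d Hd) as [B HB].
  destruct (growing_cv (exp_weight_sum d)) as [S HS].
  - intros n; apply exp_weight_sum_mono; lia.
  - exists B; intros x [n ->]; auto.
  - exists S; split; [exact HS|]. intros n. apply (Un_cv_ge_lb _ _ n _ HS).
    intros; now apply exp_weight_sum_mono.
Qed.

Lemma exp_weight_sum_cauchy d : 0 < d -> forall eps, 0 < eps -> exists N, forall n m,
  (N <= n)%nat -> (n <= m)%nat -> exp_weight_sum d m - exp_weight_sum d n <= eps.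
Proof.
  intros Hd eps He. destruct (exp_weight_sum_cv d Hd) as [S [HS HSb]].
  destruct (HS eps He) as [N HN]. exists N; intros n m Hn Hm.
  specialize (HN n Hn). unfold R_dist in HN. apply Rabs_def2 in HN.
  pose proof (HSb m). lra.
Qed.

End ExpWeights.

(* For [y < 1] the series [sum y ^ (a k)] is dominated by a convergent [exp_weight_sum]. *)
Lemma x_alpha_eq_1 a xa : (forall k, (1 <= k)%nat -> 0 < a k) -> Astar_poly_growth a ->
  is_x_alpha a xa -> xa = 1.
Proof.
  intros Hpos Hgr [Hlb Hglb].
  assert (Hdiv1 : 0 <= 1 <= 1 /\ sum_pow_diverges a 1).
  { assert (Hs1 : forall n, sumR n (fun k => rpow 1 (a k)) = INR n).
    { induction n as [|n IH]; [reflexivity|]. now rewrite sumR_S, S_INR, IH, rpow_1. }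
    split; [lra|]. intros M. destruct (INR_archimed 1 M ltac:(lra)) as [N HN].
    exists N. intros n Hn. rewrite Hs1. apply le_INR in Hn. lra. }
  pose proof (Hlb 1 Hdiv1). enough (1 <= xa) by lra.
  apply Hglb. intros y [Hy Hdiv]. apply Rnot_lt_le. intros Hy1.
  destruct (Rle_dec y 0) as [Hy0|Hy0].
  - destruct (Hdiv 0) as [N HN]. specialize (HN N (le_n _)).
    rewrite (sumR_ext N _ (fun _ => 0)), sumR_0 in HN; [lra|].
    intros k _. unfold rpow. destruct (Rle_dec y 0); lra.
  - set (d := - ln y).
    assert (Hy' : y = exp (- d)) by (unfold d; rewrite Ropp_involutive, exp_ln; lra).
    assert (Hd : 0 < d) by (pose proof (ln_lt_0 y ltac:(lra)); unfold d; lra).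
    destruct (exp_weight_sum_bounded a 0 Hpos Hgr d Hd) as [B HB].
    destruct (Hdiv B) as [N HN]. specialize (HN N (le_n _)). specialize (HB N).
    enough (sumR N (fun k => rpow y (a k)) <= exp_weight_sum a 0 d N) by lra.
    apply sumR_le. intros k Hk. rewrite Hy', rpow_exp. simpl.
    pose proof (exp_pos (- (a k * d))). lra.
Qed.

(** * Continuity and integrals *)

Lemma continuous_Rmult (f g : R -> R) x :
  continuous f x -> continuous g x -> continuous (fun t => f t * g t) x.
Proof. intros; now apply (continuous_mult f g). Qed.

Lemma continuous_sumR (f : nat -> R -> R) n x :
  (forall k, continuous (f k) x) -> continuous (fun t => sumR n (fun k => f k t)) x.
Proof.
  intros H. induction n as [|n IH]; simpl; [apply continuous_const|].
  now apply (continuous_plus (fun t => sumR n (fun k => f k t)) (f (S n))).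
Qed.

Lemma continuous_prodR (f : nat -> R -> R) n x :
  (forall k, continuous (f k) x) -> continuous (fun t => prodR n (fun k => f k t)) x.
Proof.
  intros H. induction n as [|n IH]; simpl; [apply continuous_const|].
  now apply continuous_Rmult.
Qed.

Lemma continuous_of_unif_approx (f : nat -> R -> R) (g : R -> R) x0 r : 0 < r ->
  (forall n, continuous (f n) x0) ->
  (forall eps, 0 < eps -> exists n, forall y, Rabs (y - x0) < r -> Rabs (g y - f n y) <= eps) ->
  continuous g x0.
Proof.
  intros Hr Hf Hu. apply continuity_pt_filterlim.
  intros eps He. destruct (Hu (eps / 3) ltac:(lra)) as [n Hn].
  destruct (proj2 (continuity_pt_filterlim (f n) x0) (Hf n) (eps / 3) ltac:(lra)) as [al [Hal Hc]].
  exists (Rmin al r). split; [now apply Rmin_glb_lt|]. intros x [Hd Hx]. simpl in *.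
  unfold R_dist in *.
  assert (Hx1 : Rabs (x - x0) < al) by (eapply Rlt_le_trans; [exact Hx|apply Rmin_l]).
  assert (Hx2 : Rabs (x - x0) < r) by (eapply Rlt_le_trans; [exact Hx|apply Rmin_r]).
  specialize (Hc x (conj Hd Hx1)). pose proof (Hn x Hx2).
  pose proof (Hn x0 ltac:(rewrite Rminus_diag, Rabs_R0; lra)).
  replace (g x - g x0) with ((g x - f n x) + (f n x - f n x0) + - (g x0 - f n x0)) by ring.
  pose proof (Rabs_triang ((g x - f n x) + (f n x - f n x0)) (- (g x0 - f n x0))).
  pose proof (Rabs_triang (g x - f n x) (f n x - f n x0)). rewrite Rabs_Ropp in *. lra.
Qed.

Lemma RInt_Chasles_R (f : R -> R) u v w :
  ex_RInt f u v -> ex_RInt f v w -> RInt f u v + RInt f v w = RInt f u w.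
Proof. exact (RInt_Chasles f u v w). Qed.

Lemma RInt_le_const (f : R -> R) u v M : u <= v -> ex_RInt f u v ->
  (forall x, u < x < v -> f x <= M) -> RInt f u v <= M * (v - u).
Proof.
  intros H1 H2 H3. apply Rle_trans with (RInt (fun _ => M) u v).
  - apply RInt_le; auto. apply ex_RInt_const.
  - rewrite RInt_const. unfold scal; simpl; unfold mult; simpl. lra.
Qed.

Lemma RInt_diff_le (f g : R -> R) u v M : u <= v -> ex_RInt f u v -> ex_RInt g u v ->
  (forall t, u <= t <= v -> Rabs (f t - g t) <= M) -> Rabs (RInt f u v - RInt g u v) <= (v - u) * M.
Proof.
  intros H1 H2 H3 H4. assert (E := RInt_minus f g u v H2 H3).
  unfold minus, plus, opp in E; simpl in E. unfold Rminus at 1. rewrite <- E.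
  apply abs_RInt_le_const; auto. apply (ex_RInt_minus f g u v H2 H3).
Qed.

Lemma ex_RInt_exp_neg B k u v : ex_RInt (fun t => B * exp (- (k * t))) u v.
Proof.
  apply (@ex_RInt_continuous R_CompleteNormedModule). intros.
  apply (@ex_derive_continuous R_AbsRing R_NormedModule). auto_derive. exact I.
Qed.

Lemma RInt_exp_neg B k u v : 0 < k ->
  RInt (fun t => B * exp (- (k * t))) u v = B / k * (exp (- (k * u)) - exp (- (k * v))).
Proof.
  intros Hk. apply is_RInt_unique.
  replace (B / k * (exp (- (k * u)) - exp (- (k * v))))
    with (minus (- (B / k) * exp (- (k * v))) (- (B / k) * exp (- (k * u))))
    by (unfold minus, plus, opp; simpl; field; lra).
  apply (is_RInt_derive (fun t => - (B / k) * exp (- (k * t)))).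
  - intros x _. auto_derive; [exact I|field; lra].
  - intros x _. apply (@ex_derive_continuous R_AbsRing R_NormedModule). auto_derive. exact I.
Qed.

(* The limit is the supremum of the [RInt f 0 T], which exists by completeness. *)
Lemma improper_int0_of_tail_le (f : R -> R) (tau : R -> R) T1 :
  (forall u v, ex_RInt f u v) -> (forall t, 0 <= t -> 0 <= f t) -> 0 <= T1 ->
  (forall T T', T1 <= T -> T <= T' -> RInt f T T' <= tau T) ->
  (forall eps, 0 < eps -> exists T, T1 <= T /\ tau T < eps) ->
  exists l, improper_int0 f l /\ forall T, T1 <= T -> RInt f 0 T <= l <= RInt f 0 T + tau T.
Proof.
  intros Hex Hnn HT1 Htail Htau.
  assert (Htau0 : forall T, T1 <= T -> 0 <= tau T).
  { intros T HT. pose proof (Htail T T HT (Rle_refl _)). now rewrite RInt_point in H. }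
  assert (Hmono : forall T T', 0 <= T -> T <= T' -> RInt f 0 T <= RInt f 0 T').
  { intros T T' H1 H2. rewrite <- (RInt_Chasles_R f 0 T T') by apply Hex.
    assert (0 <= RInt f T T') by (apply RInt_ge_0; auto; intros; apply Hnn; lra). lra. }
  assert (Hub : forall T, T1 <= T -> forall T'', 0 <= T'' -> RInt f 0 T'' <= RInt f 0 T + tau T).
  { intros T HT T'' H''. destruct (Rle_dec T'' T).
    - pose proof (Hmono T'' T H'' r). pose proof (Htau0 T HT). lra.
    - rewrite <- (RInt_Chasles_R f 0 T T'') by apply Hex. pose proof (Htail T T'' HT ltac:(lra)). lra. }
  destruct (completeness (fun x => exists T, 0 <= T /\ x = RInt f 0 T)) as [l [Hl1 Hl2]].
  { exists (RInt f 0 T1 + tau T1). intros x [T [HT ->]]. apply Hub; lra. }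
  { exists (RInt f 0 0), 0. split; [lra|auto]. }
  assert (Hl : forall T, T1 <= T -> RInt f 0 T <= l <= RInt f 0 T + tau T).
  { intros T HT. split; [apply Hl1; exists T; split; auto; lra|].
    apply Hl2. intros x [T'' [H'' ->]]. now apply Hub. }
  exists l. split; [split|exact Hl].
  - intros T HT. constructor. apply ex_RInt_Reals_0, Hex.
  - intros eps He. destruct (Htau eps He) as [T0 [HT0 HT0e]]. exists T0. intros T pr HT.
    rewrite <- RInt_Reals. destruct (Hl T ltac:(lra)), (Hl T0 HT0).
    pose proof (Hmono T0 T ltac:(lra) HT). rewrite Rabs_left1 by lra. lra.
Qed.

(* [I] is the supremum of the [RInt f d T] over [0 < d <= T]. *)
Lemma integral_0_infty_sup (f : R -> R) (tau : R -> R) B0 :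
  (forall u v, 0 < u -> 0 < v -> ex_RInt f u v) -> (forall t, 0 < t -> 0 <= f t) ->
  0 <= B0 -> (forall t, 0 < t <= 1 -> f t <= B0) ->
  (forall T T', 1 <= T -> T <= T' -> RInt f T T' <= tau T) ->
  exists I, (forall d T, 0 < d -> d <= T -> RInt f d T <= I) /\
    (forall d T, 0 < d <= 1 -> 1 <= T -> I <= RInt f d T + B0 * d + tau T).
Proof.
  intros Hex Hnn HB0 Hf0 Htail.
  assert (Hnn_int : forall u v, 0 < u -> u <= v -> 0 <= RInt f u v).
  { intros u v Hu Huv. apply RInt_ge_0; auto; [apply Hex; lra|intros; apply Hnn; lra]. }
  assert (Hub : forall d T, 0 < d <= 1 -> 1 <= T -> forall d' T', 0 < d' -> d' <= T' ->
            RInt f d' T' <= RInt f d T + B0 * d + tau T).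
  { intros d T Hd HT d' T' Hd' HdT'. set (m := Rmin d d'). set (M := Rmax T T').
    assert (Hm : 0 < m <= d /\ m <= d')
      by (unfold m; split; [split; [apply Rmin_glb_lt|apply Rmin_l]|apply Rmin_r]; lra).
    assert (HM : T <= M /\ T' <= M) by (unfold M; split; [apply Rmax_l|apply Rmax_r]).
    assert (RInt f d' T' <= RInt f m M).
    { rewrite <- (RInt_Chasles_R f m d' M), <- (RInt_Chasles_R f d' T' M) by (apply Hex; lra).
      pose proof (Hnn_int m d' ltac:(lra) ltac:(lra)). pose proof (Hnn_int T' M ltac:(lra) ltac:(lra)). lra. }
    rewrite <- (RInt_Chasles_R f m d M), <- (RInt_Chasles_R f d T M) in H by (apply Hex; lra).
    assert (RInt f m d <= B0 * (d - m)) by (apply RInt_le_const; [lra|apply Hex; lra|intros; apply Hf0; lra]).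
    pose proof (Htail T M HT ltac:(lra)). assert (B0 * (d - m) <= B0 * d) by (apply Rmult_le_compat_l; lra).
    lra. }
  destruct (completeness (fun x => exists d T, 0 < d /\ d <= T /\ x = RInt f d T)) as [I [HI1 HI2]].
  { exists (RInt f 1 1 + B0 * 1 + tau 1). intros x (d & T & H1 & H2 & ->). apply Hub; lra. }
  { exists (RInt f 1 1), 1, 1. repeat split; lra. }
  exists I. split.
  - intros d T Hd HT. apply HI1. exists d, T; auto.
  - intros d T Hd HT. apply HI2. intros x (d' & T' & H1 & H2 & ->). now apply Hub.
Qed.

Definition exp_tail (B k T : R) : R := B / k * exp (- (k * T)).

Lemma exp_tail_anti B k T T' : 0 <= B -> 0 < k -> T <= T' -> exp_tail B k T' <= exp_tail B k T.
Proof.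
  intros HB Hk HT. unfold exp_tail. apply Rmult_le_compat_l; [apply Rdiv_le_0_compat; lra|].
  apply exp_le_compat, Ropp_le_contravar, Rmult_le_compat_l; lra.
Qed.

Lemma exp_tail_small B k : 0 <= B -> 0 < k ->
  forall eps, 0 < eps -> exists T, 1 <= T /\ exp_tail B k T < eps.
Proof.
  intros HB Hk eps He.
  assert (0 <= B / (k * k * eps)) by (apply Rdiv_le_0_compat; [|apply Rmult_lt_0_compat]; nra).
  set (T := 1 + B / (k * k * eps)). exists T. split; [unfold T; lra|].
  assert (HkT : 0 < k * T) by (apply Rmult_lt_0_compat; unfold T; lra).
  unfold exp_tail. apply Rle_lt_trans with (B / k * (1 / (k * T))).
  { apply Rmult_le_compat_l; [apply Rdiv_le_0_compat; lra|now apply exp_neg_le_inv]. }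
  replace (B / k * (1 / (k * T))) with (B / (k * k * T)) by (field; unfold T; lra).
  apply (Rmult_lt_reg_r (k * k * T)); [nra|]. unfold Rdiv. rewrite Rmult_assoc, Rinv_l by nra.
  unfold T. replace (eps * (k * k * (1 + B / (k * k * eps)))) with (eps * (k * k) + B) by (field; nra).
  assert (0 < eps * (k * k)) by (apply Rmult_lt_0_compat; nra). lra.
Qed.

Lemma RInt_le_exp_tail (f : R -> R) B k T T' : 0 <= B -> 0 < k -> T <= T' -> ex_RInt f T T' ->
  (forall t, T <= t <= T' -> f t <= B * exp (- (k * t))) -> RInt f T T' <= exp_tail B k T.
Proof.
  intros HB Hk HT Hex Hf. apply Rle_trans with (RInt (fun t => B * exp (- (k * t))) T T').
  - apply RInt_le; auto; [apply ex_RInt_exp_neg|]. intros; apply Hf; lra.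
  - rewrite RInt_exp_neg by lra. unfold exp_tail. pose proof (exp_pos (- (k * T'))).
    apply Rmult_le_compat_l; [apply Rdiv_le_0_compat|]; lra.
Qed.

(** * The integrands of [E[U_j^N]] and [I(alpha; j)] *)

Section Integrands.

Variables (a : nat -> R) (j : nat) (c : R).
Hypothesis Hpos : forall k, (1 <= k)%nat -> 0 < a k.
Hypothesis Hgr : Astar_poly_growth a.
Hypothesis Hc : 0 < c.
Hypothesis Hca : forall k, (1 <= k)%nat -> c <= a k.
Hypothesis Hj : (2 <= j)%nat.

Definition L_term (t : R) (k : nat) : R :=
  a k ^ j * rpow (exp (- t)) (a k) / (1 - rpow (exp (- t)) (a k)).
Definition L_partial (t : R) (n : nat) : R := sumR n (L_term t).
Definition F_partial (t : R) (n : nat) : R := prodR n (fun k => 1 - rpow (exp (- t)) (a k)).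

Definition gap_inv (d : R) : R := 1 / (1 - exp (- (c * d))).

Lemma gap_inv_pos d : 0 < d -> 0 < gap_inv d.
Proof.
  intros Hd. pose proof (exp_neg_lt_1 (c * d) ltac:(apply Rmult_lt_0_compat; lra)).
  apply Rdiv_lt_0_compat; lra.
Qed.

Lemma rpow_exp_bounds d t k : 0 < d -> d <= t -> (1 <= k)%nat ->
  0 < rpow (exp (- t)) (a k) <= exp (- (a k * d)) /\
  exp (- (a k * d)) <= exp (- (c * d)) /\ exp (- (c * d)) < 1.
Proof.
  intros Hd Ht Hk. rewrite rpow_exp. pose proof (Hpos k Hk). pose proof (Hca k Hk).
  split; [split|split]; [apply exp_pos| | |apply exp_neg_lt_1; apply Rmult_lt_0_compat; lra];
    apply exp_le_compat, Ropp_le_contravar; [apply Rmult_le_compat_l|apply Rmult_le_compat_r]; lra.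
Qed.

Lemma L_term_bounds d t k : 0 < d -> d <= t -> (1 <= k)%nat ->
  0 <= L_term t k <= gap_inv d * ((a k ^ j + 1) * exp (- (a k * d))).
Proof.
  intros Hd Ht Hk. destruct (rpow_exp_bounds d t k Hd Ht Hk) as [[E1 E2] [E3 E4]].
  unfold L_term, gap_inv. set (e := rpow (exp (- t)) (a k)) in *. pose proof (Hpos k Hk).
  set (f := exp (- (a k * d))) in *. set (g := exp (- (c * d))) in *.
  assert (0 <= a k ^ j) by (apply pow_le; lra).
  assert (0 < / (1 - g)) by (apply Rinv_0_lt_compat; lra).
  split; [apply Rmult_le_pos; [apply Rmult_le_pos|left; apply Rinv_0_lt_compat]; lra|].
  unfold Rdiv. apply Rle_trans with (a k ^ j * f * / (1 - g)); [|nra].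
  apply Rmult_le_compat; [apply Rmult_le_pos; lra|left; apply Rinv_0_lt_compat; lra| |].
  - apply Rmult_le_compat_l; lra.
  - apply Rinv_le_contravar; lra.
Qed.

Lemma L_partial_diff d t n m : 0 < d -> d <= t -> (n <= m)%nat ->
  0 <= L_partial t m - L_partial t n <= gap_inv d * (exp_weight_sum a j d m - exp_weight_sum a j d n).
Proof.
  intros Hd Ht H; induction H as [|m H IH]; [lra|]. unfold L_partial, exp_weight_sum in *.
  rewrite !sumR_S. pose proof (L_term_bounds d t (S m) Hd Ht ltac:(lia)). lra.
Qed.

Lemma F_partial_in_01 t n : 0 < t -> 0 <= F_partial t n <= 1.
Proof.
  intros Ht. apply prodR_in_01. intros k Hk.
  destruct (rpow_exp_bounds t t k Ht (Rle_refl _) ltac:(lia)) as [[A B] [C D]]. lra.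
Qed.

Lemma F_partial_diff d t n m : 0 < d -> d <= t -> (n <= m)%nat ->
  0 <= F_partial t n - F_partial t m <= exp_weight_sum a j d m - exp_weight_sum a j d n.
Proof.
  intros Hd Ht H; induction H as [|m H IH]; [lra|].
  pose proof (F_partial_in_01 t m ltac:(lra)). unfold F_partial, exp_weight_sum in *.
  rewrite prodR_S, sumR_S.
  destruct (rpow_exp_bounds d t (S m) Hd Ht ltac:(lia)) as [[A B] [C D]].
  assert (exp (- (a (S m) * d)) <= (a (S m) ^ j + 1) * exp (- (a (S m) * d))).
  { pose proof (pow_le (a (S m)) j ltac:(pose proof (Hpos (S m) ltac:(lia)); lra)).
    pose proof (exp_pos (- (a (S m) * d))). nra. }
  set (P := prodR m _) in *. set (e := rpow (exp (- t)) (a (S m))) in *. split; nra.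
Qed.

Lemma L_partial_cv t : 0 < t -> Un_cv (L_partial t) (Lfun a (exp (- t)) j).
Proof.
  intros Ht. destruct (exp_weight_sum_cv a j Hpos Hgr t Ht) as [s [Hs HSb]].
  pose proof (gap_inv_pos t Ht).
  destruct (growing_cv (L_partial t)) as [l Hl].
  - intros n. pose proof (L_partial_diff t t n (S n) Ht (Rle_refl _) ltac:(lia)). lra.
  - exists (gap_inv t * s). intros x [n ->].
    pose proof (L_partial_diff t t 0 n Ht (Rle_refl _) ltac:(lia)).
    unfold L_partial, exp_weight_sum in *; simpl in *. specialize (HSb n).
    unfold exp_weight_sum in *. nra.
  - unfold Lfun. rewrite (seq_lim_eq _ l); exact Hl.
Qed.

Lemma F_partial_cv t : 0 < t -> Un_cv (F_partial t) (Ffun a (exp (- t))).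
Proof.
  intros Ht. destruct (decreasing_cv (F_partial t)) as [l Hl].
  - intros n. pose proof (F_partial_diff t t n (S n) Ht (Rle_refl _) ltac:(lia)). lra.
  - exists 0. intros x [n ->]. unfold opp_seq. pose proof (F_partial_in_01 t n Ht). lra.
  - unfold Ffun. rewrite (seq_lim_eq _ l); exact Hl.
Qed.

(* Uniform on [[d, +oo)]: both tails are controlled by the tail of [exp_weight_sum a j d]. *)
Lemma LF_partial_unif d : 0 < d -> forall eps, 0 < eps -> exists N, forall n t, (N <= n)%nat -> d <= t ->
  0 <= Lfun a (exp (- t)) j - L_partial t n <= eps /\ 0 <= F_partial t n - Ffun a (exp (- t)) <= eps.
Proof.
  intros Hd eps He. pose proof (gap_inv_pos d Hd).
  destruct (exp_weight_sum_cauchy a j Hpos Hgr d Hd (Rmin eps (eps / gap_inv d))) as [N HN].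
  { apply Rmin_glb_lt; [|apply Rdiv_lt_0_compat]; lra. }
  pose proof (Rmin_l eps (eps / gap_inv d)). pose proof (Rmin_r eps (eps / gap_inv d)).
  exists N. intros n t Hn Ht. assert (Ht0 : 0 < t) by lra.
  pose proof (L_partial_cv t Ht0) as HL. pose proof (F_partial_cv t Ht0) as HF.
  split; split.
  - enough (L_partial t n <= Lfun a (exp (- t)) j) by lra.
    apply (Un_cv_ge_lb _ _ n _ HL). intros m Hm. pose proof (L_partial_diff d t n m Hd Ht Hm). lra.
  - enough (Lfun a (exp (- t)) j <= L_partial t n + eps) by lra.
    apply (Un_cv_le_ub _ _ n _ HL). intros m Hm. pose proof (L_partial_diff d t n m Hd Ht Hm).
    pose proof (HN n m Hn Hm).
    assert (gap_inv d * (exp_weight_sum a j d m - exp_weight_sum a j d n) <= gap_inv d * (eps / gap_inv d))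
      by (apply Rmult_le_compat_l; lra).
    replace (gap_inv d * (eps / gap_inv d)) with eps in * by (field; lra). lra.
  - enough (Ffun a (exp (- t)) <= F_partial t n) by lra.
    apply (Un_cv_le_ub _ _ n _ HF). intros m Hm. pose proof (F_partial_diff d t n m Hd Ht Hm). lra.
  - enough (F_partial t n - eps <= Ffun a (exp (- t))) by lra.
    apply (Un_cv_ge_lb _ _ n _ HF). intros m Hm. pose proof (F_partial_diff d t n m Hd Ht Hm).
    pose proof (HN n m Hn Hm). lra.
Qed.

Lemma Ffun_in_01 t : 0 < t -> 0 <= Ffun a (exp (- t)) <= 1.
Proof.
  intros Ht. split.
  - apply (Un_cv_ge_lb _ _ 0 _ (F_partial_cv t Ht)). intros m _; now apply F_partial_in_01.
  - apply (Un_cv_le_ub _ _ 0 _ (F_partial_cv t Ht)). intros m _; now apply F_partial_in_01.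
Qed.

Lemma L_bounded d : 0 < d -> exists B, forall t, d <= t ->
  0 <= Lfun a (exp (- t)) j <= B /\ forall n, 0 <= L_partial t n <= B.
Proof.
  intros Hd. destruct (exp_weight_sum_cv a j Hpos Hgr d Hd) as [s [Hs HSb]].
  pose proof (gap_inv_pos d Hd).
  assert (Hb : forall t n, d <= t -> 0 <= L_partial t n <= gap_inv d * s).
  { intros t n Ht. pose proof (L_partial_diff d t 0 n Hd Ht ltac:(lia)).
    unfold L_partial, exp_weight_sum in *; simpl in *. specialize (HSb n).
    unfold exp_weight_sum in *. nra. }
  exists (gap_inv d * s). intros t Ht. split; [split|now intros; apply Hb].
  - apply (Un_cv_ge_lb _ _ 0 _ (L_partial_cv t ltac:(lra))). intros; now apply Hb.
  - apply (Un_cv_le_ub _ _ 0 _ (L_partial_cv t ltac:(lra))). intros; now apply Hb.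
Qed.

Let fj := INR (fact (j - 1)).

Let fj_pos : 0 < fj.
Proof. apply INR_fact_lt_0. Qed.

Definition I_integrand_exp (t : R) : R := I_integrand a j (exp (- t)) * exp (- t).

Lemma EU_integrand_eq N t : 0 < t -> EU_integrand a N j t = t ^ (j - 1) / fj * L_partial t N * F_partial t N.
Proof.
  intros Ht. unfold EU_integrand, L_partial.
  rewrite Rmult_assoc, (Rmult_comm (sumR _ _)), <- Rmult_assoc, <- sumR_scal.
  apply sumR_ext. intros k Hk.
  destruct (rpow_exp_bounds t t k Ht (Rle_refl _) ltac:(lia)) as [[E1 E2] [E3 E4]].
  unfold F_partial. rewrite <- (prodR_except_mul N (fun i => 1 - rpow (exp (- t)) (a i)) k Hk).
  rewrite (prodR_ext N (fun i => if Nat.eq_dec i k then 1 else 1 - rpow (exp (- t)) (a i))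
            (fun i => if Nat.eq_dec i k then 1 else 1 - exp (- (a i * t)))).
  2:{ intros i _. destruct (Nat.eq_dec i k); auto. now rewrite rpow_exp. }
  unfold L_term. rewrite rpow_exp in *. set (e := exp (- (a k * t))) in *.
  set (P := prodR N _). unfold fj. destruct j as [|j']; [lia|]. replace (S j' - 1)%nat with j' by lia.
  simpl. rewrite Rpow_mult_distr. pose proof (INR_fact_lt_0 j'). field. split; lra.
Qed.

Lemma I_integrand_exp_eq t : 0 < t ->
  I_integrand_exp t = t ^ (j - 1) / fj * Lfun a (exp (- t)) j * Ffun a (exp (- t)).
Proof.
  intros Ht. unfold I_integrand_exp, I_integrand.
  rewrite ln_exp, Rabs_Ropp, Rabs_pos_eq by lra.
  pose proof (exp_pos (- t)). fold fj. field. split; lra.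
Qed.

Lemma prodR_except_exp_in_01 N t k : 0 <= t ->
  0 <= prodR N (fun i => if Nat.eq_dec i k then 1 else 1 - exp (- (a i * t))) <= 1.
Proof.
  intros Ht. apply prodR_in_01. intros i Hi. destruct (Nat.eq_dec i k); [lra|].
  pose proof (exp_neg_le_1 (a i * t) ltac:(apply Rmult_le_pos; [pose proof (Hpos i ltac:(lia))|]; lra)).
  pose proof (exp_pos (- (a i * t))). lra.
Qed.

Lemma EU_integrand_le N t Q : 0 <= t -> 0 <= Q ->
  (forall k, (1 <= k <= N)%nat ->
     prodR N (fun i => if Nat.eq_dec i k then 1 else 1 - exp (- (a i * t))) <= Q) ->
  0 <= EU_integrand a N j t <= Q * (t ^ (j - 1) / fj) * exp_weight_sum a j t N.
Proof.
  intros Ht HQ HP. unfold EU_integrand, exp_weight_sum. rewrite <- sumR_scal.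
  split; [apply sumR_nonneg|apply sumR_le]; intros k Hk;
    pose proof (prodR_except_exp_in_01 N t k Ht); pose proof (Hpos k ltac:(lia));
    pose proof (exp_pos (- (a k * t)));
    set (P := prodR N _) in *; set (e := exp (- (a k * t))) in *; fold fj.
  - apply Rmult_le_pos; [|lra]. unfold Rdiv.
    repeat apply Rmult_le_pos; try lra; [apply pow_le; nra|left; apply Rinv_0_lt_compat; lra].
  - specialize (HP k Hk); fold P in HP. rewrite Rpow_mult_distr.
    replace (a k ^ j) with (a k * a k ^ (j - 1)) by (rewrite tech_pow_Rmult; f_equal; lia).
    assert (0 <= a k ^ (j - 1)) by (apply pow_le; lra). assert (0 <= t ^ (j - 1)) by (apply pow_le; lra).
    set (A := a k ^ (j - 1)) in *. set (T := t ^ (j - 1)) in *.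
    assert (0 <= a k * e * (A * T) / fj)
      by (unfold Rdiv; repeat apply Rmult_le_pos; try lra; left; apply Rinv_0_lt_compat; lra).
    apply Rle_trans with (a k * e * (A * T) / fj * Q); [apply Rmult_le_compat_l; lra|].
    replace (a k * e * (A * T) / fj * Q) with (Q * (T / fj) * (a k * A * e)) by (field; lra).
    apply Rmult_le_compat_l; [apply Rmult_le_pos; [lra|apply Rdiv_le_0_compat; lra]|].
    assert (0 <= a k * A) by (apply Rmult_le_pos; lra). nra.
Qed.

Lemma EU_integrand_nonneg N t : 0 <= t -> 0 <= EU_integrand a N j t.
Proof.
  intros Ht. apply (EU_integrand_le N t 1 Ht ltac:(lra)).
  intros k Hk. apply (prodR_except_exp_in_01 N t k Ht).
Qed.

Lemma exp_weight_sum_shift d t n : d <= t ->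
  exp_weight_sum a j t n <= exp (- (c * (t - d))) * exp_weight_sum a j d n.
Proof.
  intros Hdt. unfold exp_weight_sum. rewrite <- sumR_scal. apply sumR_le. intros k Hk.
  pose proof (Hpos k ltac:(lia)). pose proof (Hca k ltac:(lia)).
  pose proof (pow_le (a k) j ltac:(lra)).
  assert (exp (- (a k * t)) <= exp (- (c * (t - d))) * exp (- (a k * d))).
  { rewrite <- exp_plus. apply exp_le_compat. nra. }
  nra.
Qed.

(* Half of the decay rate [c] absorbs the factor [t ^ (j - 1)]. *)
Lemma EU_integrand_le_exp : exists B, 0 <= B /\
  forall N t, 1 <= t -> EU_integrand a N j t <= B * exp (- (c / 2 * t)).
Proof.
  destruct (exp_weight_sum_le a j Hpos Hgr) as (K & q & HK & HGS).
  set (p := (j - 1)%nat).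
  assert (Hcoef : 0 <= INR p ^ p * (/ (c / 2)) ^ p)
    by (apply Rmult_le_pos; apply pow_le; [apply pos_INR|left; apply Rinv_0_lt_compat; lra]).
  exists (INR p ^ p * (/ (c / 2)) ^ p * exp c * K / fj).
  split; [pose proof (exp_pos c); apply Rdiv_le_0_compat; [apply Rmult_le_pos; [apply Rmult_le_pos|]|]; lra|].
  intros N t Ht. destruct (EU_integrand_le N t 1 ltac:(lra) ltac:(lra)) as [_ Hle].
  { intros k Hk. apply (prodR_except_exp_in_01 N t k ltac:(lra)). }
  eapply Rle_trans; [exact Hle|]. rewrite Rmult_1_l. fold p.
  assert (HS : exp_weight_sum a j t N <= exp c * exp (- (c * t)) * K).
  { specialize (HGS 1 ltac:(lra) N). rewrite pow1 in HGS.
    replace (exp c * exp (- (c * t))) with (exp (- (c * (t - 1)))) by (rewrite <- exp_plus; f_equal; ring).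
    eapply Rle_trans; [apply (exp_weight_sum_shift 1); lra|].
    apply Rmult_le_compat_l; [left; apply exp_pos|]. unfold exp_weight_sum. lra. }
  assert (HT := pow_le_exp_scaled p (c / 2) t ltac:(lra) ltac:(lra)).
  assert (HE : exp (c / 2 * t) * exp (- (c * t)) = exp (- (c / 2 * t)))
    by (rewrite <- exp_plus; f_equal; field).
  set (Z := INR p ^ p * (/ (c / 2)) ^ p) in *.
  pose proof (exp_pos c). pose proof (exp_pos (- (c * t))). assert (0 <= t ^ p) by (apply pow_le; lra).
  apply Rle_trans with (t ^ p / fj * (exp c * exp (- (c * t)) * K));
    [apply Rmult_le_compat_l; [apply Rdiv_le_0_compat|]; lra|].
  rewrite <- HE.
  replace (Z * exp c * K / fj * (exp (c / 2 * t) * exp (- (c * t))))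
    with (Z * exp (c / 2 * t) / fj * (exp c * exp (- (c * t)) * K)) by (field; lra).
  apply Rmult_le_compat_r; [apply Rmult_le_pos; [apply Rmult_le_pos|]; lra|].
  apply Rmult_le_compat_r; [left; apply Rinv_0_lt_compat|]; lra.
Qed.

(* Near [0] the product over the first [q + 1] factors is at most [(b t) ^ q], with [b]
   bounding [a_1, ..., a_(q+1)]; this compensates the bound [K / t ^ q] on the sum. *)
Lemma EU_integrand_bounded_01 : exists N0 B, 0 <= B /\
  forall N t, (N0 <= N)%nat -> 0 < t <= 1 -> EU_integrand a N j t <= B.
Proof.
  destruct (exp_weight_sum_le a j Hpos Hgr) as (K & q & HK & HGS).
  destruct (exists_pos_ub_upto a (S q)) as [b [Hb Hab]].
  assert (0 <= b ^ q * K / fj) by (apply Rdiv_le_0_compat; [apply Rmult_le_pos; [apply pow_le|]|]; lra).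
  exists (S q), (b ^ q * K / fj). split; [lra|].
  intros N t HN Ht. assert (0 <= b * t) by (apply Rmult_le_pos; lra).
  destruct (EU_integrand_le N t ((b * t) ^ q) ltac:(lra) ltac:(apply pow_le; lra)) as [_ HEU].
  { intros k Hk. destruct (Rle_dec (b * t) 1).
    - replace ((b * t) ^ q) with ((b * t) ^ (S q - 1)) by (f_equal; lia).
      apply prodR_except_le_pow; [lra|exact HN| |].
      + intros i Hi. pose proof (exp_neg_le_1 (a i * t) ltac:(pose proof (Hpos i ltac:(lia)); nra)).
        pose proof (exp_pos (- (a i * t))). lra.
      + intros i Hi. pose proof (exp_ineq1_le (- (a i * t))). pose proof (Hab i Hi). nra.
    - apply Rle_trans with 1; [apply (prodR_except_exp_in_01 N t k ltac:(lra))|apply pow_R1_Rle; lra]. }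
  eapply Rle_trans; [exact HEU|]. specialize (HGS t Ht N).
  assert (0 < t ^ q) by (apply pow_lt; lra).
  assert (0 <= t ^ (j - 1) <= 1) by (split; [apply pow_le|apply pow_le_1]; lra).
  rewrite Rpow_mult_distr.
  apply Rle_trans with (b ^ q * t ^ q * (t ^ (j - 1) / fj) * (K / t ^ q)).
  { apply Rmult_le_compat_l; [|exact HGS].
    apply Rmult_le_pos; [apply Rmult_le_pos; [apply pow_le|]|apply Rdiv_le_0_compat]; lra. }
  replace (b ^ q * t ^ q * (t ^ (j - 1) / fj) * (K / t ^ q)) with (b ^ q * K / fj * t ^ (j - 1))
    by (field; lra).
  nra.
Qed.

Lemma EU_integrand_unif_cv d T : 0 < d -> forall eps, 0 < eps -> exists N, forall n t,
  (N <= n)%nat -> d <= t <= T -> Rabs (I_integrand_exp t - EU_integrand a n j t) <= eps.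
Proof.
  intros Hd eps He. destruct (L_bounded d Hd) as [B HB].
  assert (HB0 : 0 <= B) by (destruct (HB d (Rle_refl _)) as [[? ?] _]; lra).
  set (p := (j - 1)%nat). set (Tp := Rabs T ^ p).
  assert (HTp : 0 <= Tp) by (apply pow_le, Rabs_pos).
  set (eta := eps * fj / ((1 + B) * (Tp + 1))).
  assert (Heta : 0 < eta)
    by (apply Rdiv_lt_0_compat; apply Rmult_lt_0_compat; try apply Rmult_lt_0_compat; lra).
  destruct (LF_partial_unif d Hd eta Heta) as [N HN].
  exists N. intros n t Hn Ht. destruct (HN n t Hn ltac:(lra)) as [[L1 L2] [F1 F2]].
  destruct (HB t ltac:(lra)) as [[L3 L4] L5]. specialize (L5 n).
  pose proof (Ffun_in_01 t ltac:(lra)). pose proof (F_partial_in_01 t n ltac:(lra)).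
  rewrite I_integrand_exp_eq, EU_integrand_eq by lra. fold p.
  set (L := Lfun a (exp (- t)) j) in *. set (F := Ffun a (exp (- t))) in *.
  set (L' := L_partial t n) in *. set (F' := F_partial t n) in *.
  replace (t ^ p / fj * L * F - t ^ p / fj * L' * F') with (t ^ p / fj * ((L - L') * F + L' * (F - F')))
    by ring.
  assert (Htp : 0 <= t ^ p <= Tp).
  { split; [apply pow_le; lra|]. apply pow_incr. split; [lra|]. apply Rle_trans with T; [lra|apply Rle_abs]. }
  assert (HX : Rabs ((L - L') * F + L' * (F - F')) <= eta * (1 + B)).
  { eapply Rle_trans; [apply Rabs_triang|]. rewrite !Rabs_mult.
    rewrite (Rabs_pos_eq (L - L')), (Rabs_pos_eq F), (Rabs_pos_eq L'), Rabs_minus_sym, Rabs_pos_eq by lra.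
    assert ((L - L') * F <= eta * 1) by (apply Rmult_le_compat; lra).
    assert (L' * (F' - F) <= B * eta) by (apply Rmult_le_compat; lra). lra. }
  rewrite Rabs_mult, (Rabs_pos_eq (t ^ p / fj)) by (apply Rdiv_le_0_compat; lra).
  apply Rle_trans with (Tp / fj * (eta * (1 + B))).
  { apply Rmult_le_compat; [apply Rdiv_le_0_compat; lra|apply Rabs_pos| |exact HX].
    apply Rmult_le_compat_r; [left; apply Rinv_0_lt_compat|]; lra. }
  replace (Tp / fj * (eta * (1 + B))) with (eps * (Tp / (Tp + 1))) by (unfold eta; field; lra).
  rewrite <- (Rmult_1_r eps) at 2. apply Rmult_le_compat_l; [lra|].
  apply (Rmult_le_reg_r (Tp + 1)); [lra|]. unfold Rdiv; rewrite Rmult_assoc, Rinv_l; lra.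
Qed.

Lemma EU_integrand_continuous N t : continuous (EU_integrand a N j) t.
Proof.
  unfold EU_integrand. apply continuous_sumR. intros k. apply continuous_Rmult.
  - apply (@ex_derive_continuous R_AbsRing R_NormedModule). auto_derive. exact I.
  - apply continuous_prodR. intros i. destruct (Nat.eq_dec i k); [apply continuous_const|].
    apply (@ex_derive_continuous R_AbsRing R_NormedModule). auto_derive. exact I.
Qed.

Lemma I_integrand_exp_continuous t : 0 < t -> continuous I_integrand_exp t.
Proof.
  intros Ht. apply (continuous_of_unif_approx (fun n => EU_integrand a n j) _ t (t / 2)); [lra| |].
  - intros; apply EU_integrand_continuous.
  - intros eps He. destruct (EU_integrand_unif_cv (t / 2) (3 * t / 2) ltac:(lra) eps He) as [N HN].
    exists N. intros y Hy. apply Rabs_def2 in Hy. apply HN; [lia|lra].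
Qed.

Lemma ex_RInt_EU_integrand N u v : ex_RInt (EU_integrand a N j) u v.
Proof. apply (@ex_RInt_continuous R_CompleteNormedModule). intros; apply EU_integrand_continuous. Qed.

Lemma ex_RInt_I_integrand_exp u v : 0 < u -> 0 < v -> ex_RInt I_integrand_exp u v.
Proof.
  intros Hu Hv. apply (@ex_RInt_continuous R_CompleteNormedModule). intros z Hz.
  apply I_integrand_exp_continuous. pose proof (Rmin_glb_lt u v 0 Hu Hv). lra.
Qed.

Lemma I_integrand_exp_le_of_eventually t M : 0 < t ->
  (exists N1, forall n, (N1 <= n)%nat -> EU_integrand a n j t <= M) -> I_integrand_exp t <= M.
Proof.
  intros Ht [N1 HN1]. apply Rnot_lt_le. intros Hlt.
  destruct (EU_integrand_unif_cv t t Ht ((I_integrand_exp t - M) / 2) ltac:(lra)) as [N HN].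
  specialize (HN (max N N1) t ltac:(lia) ltac:(lra)). specialize (HN1 (max N N1) ltac:(lia)).
  pose proof (Rle_abs (I_integrand_exp t - EU_integrand a (max N N1) j t)). lra.
Qed.

Lemma I_integrand_exp_nonneg t : 0 < t -> 0 <= I_integrand_exp t.
Proof.
  intros Ht. rewrite I_integrand_exp_eq by lra. destruct (L_bounded t Ht) as [B HB].
  destruct (HB t (Rle_refl _)) as [[L1 L2] _]. pose proof (Ffun_in_01 t Ht).
  assert (0 <= t ^ (j - 1)) by (apply pow_le; lra).
  apply Rmult_le_pos; [apply Rmult_le_pos; [apply Rdiv_le_0_compat|]|]; lra.
Qed.

Lemma I_integrand_exp_ln y : 0 < y -> I_integrand_exp (- ln y) = I_integrand a j y * y.
Proof. intros Hy. unfold I_integrand_exp. now rewrite Ropp_involutive, exp_ln. Qed.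

(* The substitution [y = exp (- t)], i.e. [t = - ln y], [dt = - dy / y]. *)
Lemma RInt_I_integrand_subst u v : 0 < u -> u <= v -> v < 1 ->
  ex_RInt (I_integrand a j) u v /\ RInt (I_integrand a j) u v = RInt I_integrand_exp (- ln v) (- ln u).
Proof.
  intros Hu Huv Hv.
  assert (Hmin : Rmin u v = u) by (apply Rmin_left; lra).
  assert (Hmax : Rmax u v = v) by (apply Rmax_right; lra).
  set (h := fun y : R => - / y * I_integrand_exp (- ln y)).
  assert (Hcg : forall x, u <= x <= v -> continuous I_integrand_exp (- ln x)).
  { intros x Hx. apply I_integrand_exp_continuous. pose proof (ln_lt_0 x ltac:(lra)). lra. }
  assert (Hh : forall y, 0 < y -> h y = - I_integrand a j y).
  { intros y Hy. unfold h. rewrite I_integrand_exp_ln by lra. field; lra. }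
  assert (Hcomp : RInt h u v = RInt I_integrand_exp (- ln u) (- ln v)).
  { assert (HC := @RInt_comp R_CompleteNormedModule I_integrand_exp (fun x => - ln x) (fun x => - / x) u v).
    rewrite Hmin, Hmax in HC. apply HC; [intros; now apply Hcg|].
    intros x Hx. split; [apply (is_derive_opp ln x (/ x)), is_derive_ln; lra|].
    apply (continuous_opp (fun y => / y)), continuous_Rinv. lra. }
  assert (Hexh : ex_RInt h u v).
  { apply (@ex_RInt_continuous R_CompleteNormedModule). rewrite Hmin, Hmax. intros z Hz.
    apply continuous_Rmult; [apply (continuous_opp (fun y => / y)), continuous_Rinv; lra|].
    apply (continuous_comp (fun y => - ln y) I_integrand_exp); [|now apply Hcg].
    apply (continuous_opp ln), continuous_ln. lra. }
  assert (Hext : forall x, Rmin u v < x < Rmax u v -> - h x = I_integrand a j x).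
  { rewrite Hmin, Hmax. intros x Hx. rewrite Hh by lra. apply Ropp_involutive. }
  split.
  - apply (@ex_RInt_ext R_NormedModule (fun y => - h y)); [exact Hext|].
    exact (@ex_RInt_opp R_NormedModule h u v Hexh).
  - rewrite <- (@RInt_ext R_CompleteNormedModule (fun y => - h y)) by exact Hext.
    assert (Hop := @RInt_opp R_CompleteNormedModule h u v Hexh).
    simpl in Hop. unfold opp in Hop; simpl in Hop.
    rewrite Hop, Hcomp.
    assert (Hsw := @opp_RInt_swap R_CompleteNormedModule I_integrand_exp (- ln u) (- ln v)).
    unfold opp in Hsw; simpl in Hsw. apply Hsw, ex_RInt_I_integrand_exp;
      [pose proof (ln_lt_0 u ltac:(lra))|pose proof (ln_lt_0 v ltac:(lra))]; lra.
Qed.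

Section Limits.

Variables (B0 B1 : R) (N0 : nat).
Hypothesis HB0 : 0 <= B0.
Hypothesis HB1 : 0 <= B1.
Hypothesis HD0 : forall N t, (N0 <= N)%nat -> 0 < t <= 1 -> EU_integrand a N j t <= B0.
Hypothesis HD1 : forall N t, 1 <= t -> EU_integrand a N j t <= B1 * exp (- (c / 2 * t)).

Let tail := exp_tail B1 (c / 2).

Lemma EU_integrand_improper N : exists l, improper_int0 (EU_integrand a N j) l /\
  forall T, 1 <= T -> RInt (EU_integrand a N j) 0 T <= l <= RInt (EU_integrand a N j) 0 T + tail T.
Proof.
  apply improper_int0_of_tail_le; [apply ex_RInt_EU_integrand|apply EU_integrand_nonneg|lra| |].
  - intros T T' H1 H2. apply RInt_le_exp_tail; [lra|lra|lra|apply ex_RInt_EU_integrand|].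
    intros; apply HD1; lra.
  - apply exp_tail_small; lra.
Qed.

Lemma I_integrand_exp_integral : exists I,
  (forall d T, 0 < d -> d <= T -> RInt I_integrand_exp d T <= I) /\
  (forall d T, 0 < d <= 1 -> 1 <= T -> I <= RInt I_integrand_exp d T + B0 * d + tail T).
Proof.
  apply integral_0_infty_sup; [exact ex_RInt_I_integrand_exp|exact I_integrand_exp_nonneg|exact HB0| |].
  - intros t Ht. apply I_integrand_exp_le_of_eventually; [lra|]. exists N0. intros; now apply HD0.
  - intros T T' HT HTT'. apply RInt_le_exp_tail; [lra|lra|lra|apply ex_RInt_I_integrand_exp; lra|].
    intros t Ht. apply I_integrand_exp_le_of_eventually; [lra|]. exists 0%nat. intros; apply HD1; lra.
Qed.

Variable I : R.
Hypothesis HI_ub : forall d T, 0 < d -> d <= T -> RInt I_integrand_exp d T <= I.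
Hypothesis HI_lb : forall d T, 0 < d <= 1 -> 1 <= T -> I <= RInt I_integrand_exp d T + B0 * d + tail T.

(* With [eps / 2] spent on each end: [d] near [0] and [T] near [+oo]. *)
Lemma I_integrand_improper : improper_int_open (I_integrand a j) 0 1 I.
Proof.
  split.
  { intros u v Hu Huv Hv. constructor. apply ex_RInt_Reals_0. apply (RInt_I_integrand_subst u v); lra. }
  intros eps He. destruct (exp_tail_small B1 (c / 2) HB1 ltac:(lra) (eps / 2) ltac:(lra)) as [T [HT Htail]].
  set (ds := Rmin 1 (eps / (2 * (B0 + 1)))).
  assert (Hds : 0 < ds /\ ds <= 1)
    by (unfold ds; split; [apply Rmin_glb_lt; [|apply Rdiv_lt_0_compat]|apply Rmin_l]; lra).
  assert (HB0ds : B0 * ds < eps / 2).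
  { apply Rle_lt_trans with (B0 * (eps / (2 * (B0 + 1)))); [apply Rmult_le_compat_l; [lra|apply Rmin_r]|].
    apply (Rmult_lt_reg_r (2 * (B0 + 1))); [lra|]. field_simplify; nra. }
  set (d := Rmin (1 / 2) (Rmin (exp (- T)) (ds / 2))).
  assert (Hd : 0 < d /\ d <= 1 / 2 /\ d <= exp (- T) /\ d <= ds / 2).
  { unfold d. pose proof (exp_pos (- T)). repeat split;
    [repeat apply Rmin_glb_lt; lra|apply Rmin_l|eapply Rle_trans; [apply Rmin_r|apply Rmin_l]
    |eapply Rle_trans; [apply Rmin_r|apply Rmin_r]]. }
  exists d. split; [lra|]. intros u v pr Hu Hud Hvd Hv1 Huv.
  rewrite <- RInt_Reals. destruct (RInt_I_integrand_subst u v ltac:(lra) Huv Hv1) as [_ ->].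
  pose proof (ln_lt_0 v ltac:(lra)). pose proof (ln_lt_0 u ltac:(lra)).
  assert (ln u <= ln v) by (apply ln_le; lra).
  assert (- ln v <= ds) by (pose proof (opp_ln_le v ltac:(lra)); lra).
  assert (T <= - ln u).
  { enough (ln u < - T) by lra. rewrite <- (ln_exp (- T)). apply ln_increasing; lra. }
  pose proof (HI_lb (- ln v) (- ln u) ltac:(lra) ltac:(lra)).
  pose proof (HI_ub (- ln v) (- ln u) ltac:(lra) ltac:(lra)).
  pose proof (exp_tail_anti B1 (c / 2) T (- ln u) HB1 ltac:(lra) ltac:(lra)).
  assert (B0 * (- ln v) <= B0 * ds) by (apply Rmult_le_compat_l; lra).
  unfold tail in *. rewrite Rabs_left1 by lra. lra.
Qed.

Variable E : nat -> R.
Hypothesis HE : forall N T, 1 <= T ->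
  RInt (EU_integrand a N j) 0 T <= E N <= RInt (EU_integrand a N j) 0 T + tail T.

(* Split [0, +oo) into [0, dl] (integrand bounded by [B0]), [dl, T] (uniform convergence)
   and [T, +oo) (exponential tail). *)
Lemma EU_integral_cv : Un_cv E I.
Proof.
  intros eps He. destruct (exp_tail_small B1 (c / 2) HB1 ltac:(lra) (eps / 5) ltac:(lra)) as [T [HT Htail]].
  set (dl := Rmin 1 (eps / (5 * (B0 + 1)))).
  assert (Hdl : 0 < dl /\ dl <= 1)
    by (unfold dl; split; [apply Rmin_glb_lt; [|apply Rdiv_lt_0_compat]|apply Rmin_l]; lra).
  assert (HB0dl : B0 * dl < eps / 5).
  { apply Rle_lt_trans with (B0 * (eps / (5 * (B0 + 1)))); [apply Rmult_le_compat_l; [lra|apply Rmin_r]|].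
    apply (Rmult_lt_reg_r (5 * (B0 + 1))); [lra|]. field_simplify; nra. }
  set (eta := eps / (5 * (T - dl + 1))).
  assert (Heta : 0 < eta) by (apply Rdiv_lt_0_compat; lra).
  assert (Hmid_eps : (T - dl) * eta <= eps / 5)
    by (unfold eta; apply (Rmult_le_reg_r (5 * (T - dl + 1))); [lra|]; field_simplify; nra).
  destruct (EU_integrand_unif_cv dl T (proj1 Hdl) eta Heta) as [N1 HN1].
  exists (max N0 N1). intros n Hn. unfold R_dist.
  destruct (HE n T HT) as [HEa HEb].
  rewrite <- (RInt_Chasles_R (EU_integrand a n j) 0 dl T) in HEa, HEb by apply ex_RInt_EU_integrand.
  assert (H0d : 0 <= RInt (EU_integrand a n j) 0 dl <= B0 * dl).
  { split; [apply RInt_ge_0; [lra|apply ex_RInt_EU_integrand|intros; apply EU_integrand_nonneg; lra]|].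
    replace (B0 * dl) with (B0 * (dl - 0)) by ring.
    apply RInt_le_const; [lra|apply ex_RInt_EU_integrand|]. intros x Hx. apply HD0; [lia|lra]. }
  assert (Hmid : Rabs (RInt (EU_integrand a n j) dl T - RInt I_integrand_exp dl T) <= (T - dl) * eta).
  { apply RInt_diff_le; [lra|apply ex_RInt_EU_integrand|apply ex_RInt_I_integrand_exp; lra|].
    intros t Ht. rewrite Rabs_minus_sym. apply HN1; [lia|lra]. }
  pose proof (Rle_abs (RInt (EU_integrand a n j) dl T - RInt I_integrand_exp dl T)).
  pose proof (Rle_abs (- (RInt (EU_integrand a n j) dl T - RInt I_integrand_exp dl T))).
  rewrite Rabs_Ropp in *.
  pose proof (HI_ub dl T (proj1 Hdl) ltac:(lra)). pose proof (HI_lb dl T ltac:(lra) HT).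
  unfold tail in *. apply Rabs_def1; lra.
Qed.

End Limits.

Lemma EU_cv_to_I_integral : exists I (E : nat -> R),
  improper_int_open (I_integrand a j) 0 1 I /\
  (forall N, (2 <= N)%nat -> improper_int0 (EU_integrand a N j) (E N)) /\ Un_cv E I.
Proof.
  destruct EU_integrand_le_exp as [B1 [HB1 HD1]].
  destruct EU_integrand_bounded_01 as (N0 & B0 & HB0 & HD0).
  destruct (I_integrand_exp_integral B0 B1 N0) as [I [HI_ub HI_lb]]; try assumption.
  destruct (choice _ (EU_integrand_improper B1 HB1 HD1)) as [E HE].
  exists I, E. split; [|split].
  - now apply (I_integrand_improper B0 B1).
  - intros N _. apply HE.
  - apply (EU_integral_cv B0 B1 N0); try assumption. intros N. apply HE.
Qed.

End Integrands.

Theorem mainTheorem11 (a : nat -> R)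
  (Hpos : forall k, (1 <= k)%nat -> 0 < a k)
  (Hgrowth : exists C nu M, 0 < nu /\ 0 < M /\
     forall m, M <= m -> forall n, Astar_upto a n m <= C * Rpower m nu)
  (xa : R) (Hxa : is_x_alpha a xa)
  (j : nat) (Hj : (2 <= j)%nat) :
  exists (I : R) (E : nat -> R),
    improper_int_open (I_integrand a j) 0 xa I /\
    (forall N, (2 <= N)%nat -> improper_int0 (EU_integrand a N j) (E N)) /\
    Un_cv E I.
Proof.
  rewrite (x_alpha_eq_1 a xa Hpos Hgrowth Hxa).
  destruct (exists_pos_lb a Hpos Hgrowth) as [c [Hc Hca]].
  exact (EU_cv_to_I_integral a j c Hpos Hgrowth Hc Hca Hj).
Qed.
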